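(* Let $m\in\mathbb{N}$. There is a constant $C_m$ depending only on $m$ such that for all $0<\rho\le1$, $$I(\rho)=\frac1\rho\int_1^\infty e^{-\frac12 s^{1/\rho}}\,s^{\frac m\rho+1}\,ds\le C_m.$$ *)

From HB Require Import structures.
From mathcomp Require Import all_boot all_order all_algebra.
From mathcomp Require Import all_classical all_reals all_analysis.
Set Implicit Arguments. Unset Strict Implicit. Unset Printing Implicit Defensive.

From HB Require Import structures.
From mathcomp Require Import all_boot all_order all_algebra.
From mathcomp Require Import all_classical all_reals all_analysis.
From mathcomp Require Import ring lra measurable_realfun.
Set Implicit Arguments.
Unset Strict Implicit.
Unset Printing Implicit Defensive.
Import Order.TTheory GRing.Theory Num.Theory.
Import numFieldNormedType.Exports.
Local Open Scope classical_set_scope.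
Local Open Scope ring_scope.

(* Put b = 1/rho >= 1 and t = s^b.  For s >= 1 the exponent m b + 1 is at most
   (m+1) b + (b-1), so the integrand is at most e^(-t/2) t^(m+1) s^(b-1), and
   t^(m+1) e^(-t/4) <= (4(m+1))^(m+1) leaves (4(m+1))^(m+1) e^(-t/4) s^(b-1).
   This has the explicit antiderivative -(4/b) e^(-s^b/4), so its integral over
   [1, oo[ is (4/b) e^(-1/4), and the prefactor 1/rho = b cancels the 1/b. *)

Lemma exprn_mul_expRN_le (R : realType) (n : nat) (c t : R) : 0 < c -> 0 <= t ->
  t ^+ n * expR (- (t / c)) <= (c * n%:R) ^+ n.
Proof.
move=> c0 t0; case: n => [|n].
  by rewrite !expr0 mul1r expR_le1 oppr_le0 divr_ge0 // ltW.
set N := c * n.+1%:R.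
have N0 : 0 < N by rewrite mulr_gt0 // ltr0n.
have power_le_exp : (t / N) ^+ n.+1 <= expR (t / c).
  have -> : t / c = n.+1%:R * (t / N).
    by rewrite /N; field; rewrite nat1r pnatr_eq0 (gt_eqF c0).
  rewrite (expRM_natl n.+1); apply: lerXn2r;
    rewrite ?nnegrE ?expR_ge0 ?divr_ge0 ?(ltW N0) //.
  by apply: le_trans (expR_ge1Dx _); rewrite lerDr.
have -> : t ^+ n.+1 = N ^+ n.+1 * (t / N) ^+ n.+1.
  by rewrite -exprMn mulrC divfK // lt0r_neq0.
rewrite -mulrA ler_piMr ?exprn_ge0 ?(ltW N0) //.
by rewrite expRN ler_pdivrMr ?expR_gt0 // mul1r.
Qed.

Lemma powR_cvgy (R : realType) (b : R) : 0 < b -> x `^ b @[x --> +oo] --> +oo.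
Proof.
move=> b0; apply/cvgryPge => A; near=> x.
have x0 : 0 <= x by near: x; apply: nbhs_pinfty_ge; rewrite num_real.
have xA : `|A| `^ b^-1 <= x by near: x; apply: nbhs_pinfty_ge; rewrite num_real.
apply: (le_trans (ler_norm A)).
rewrite -[leLHS](@powRr1 _ `|A|) // -(mulVf (lt0r_neq0 b0)) powRrM.
by apply: ge0_ler_powR; rewrite ?nnegrE ?powR_ge0 // ltW.
Unshelve. all: by end_near.
Qed.

Section stretched_exponential.
Variables (R : realType) (b c : R).
Hypotheses (b0 : 0 < b) (c0 : 0 < c).

Lemma is_derive_expRN_powR (x : R) : 0 < x ->
  is_derive x 1 (fun s => - (c / b) * expR (- (s `^ b / c)))
    (expR (- (x `^ b / c)) * x `^ (b - 1)).
Proof.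
move=> x0; have dpow := is_derive1_powR b x0.
apply: is_derive_eq.
by rewrite scaler0 add0r /GRing.scale /=; field; rewrite !lt0r_neq0.
Qed.

Lemma continuous_expRN_powR (x : R) : 0 < x ->
  continuous_at x (fun s => expR (- (s `^ b / c)) * s `^ (b - 1)).
Proof.
move=> x0; have dpow := is_derive1_powR b x0.
have dpow1 := is_derive1_powR (b - 1) x0.
by apply: differentiable_continuous; apply/derivable1_diffP; exact: ex_derive.
Qed.

Lemma expRN_powR_cvgy : expR (- (x `^ b / c)) @[x --> +oo] --> 0.
Proof.
apply: (@cvg_comp _ _ _ _ (fun y : R => expR (- y)) _ (pinfty_nbhs R)).
  by apply: gt0_cvgMly; [rewrite invr_gt0 | exact: powR_cvgy].
exact: cvgr_expR.
Qed.

Lemma integral_expRN_powR (a : R) : 0 < a ->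
  (\int[lebesgue_measure]_(s in `[a, +oo[)
      (expR (- (s `^ b / c)) * s `^ (b - 1))%:E =
   ((c / b) * expR (- (a `^ b / c)))%:E)%E.
Proof.
move=> a0; have gt0_of_ge_a (x : R) : a <= x -> 0 < x by exact: lt_le_trans.
pose F s := - (c / b) * expR (- (s `^ b / c)).
have -> : ((c / b) * expR (- (a `^ b / c)))%:E = (0%:E - (F a)%:E)%E.
  by rewrite -EFinB sub0r /F mulNr opprK.
apply: ge0_continuous_FTC2y.
- by move=> x _; rewrite mulr_ge0 ?expR_ge0 ?powR_ge0.
- apply/continuous_in_subspaceT => x /[1!inE]; rewrite /= in_itv /= andbT => ax.
  exact/continuous_expRN_powR/gt0_of_ge_a.
- rewrite -(mulr0 (- (c / b))).
  by apply: cvgM; [exact: cvg_cst | exact: expRN_powR_cvgy].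
- by move=> x /ltW /gt0_of_ge_a /is_derive_expRN_powR [].
- apply/cvg_at_right_filter/differentiable_continuous/derivable1_diffP.
  by case: (is_derive_expRN_powR a0).
- move=> x; rewrite in_itv /= andbT => /ltW /gt0_of_ge_a x0.
  by rewrite derive1E; case: (is_derive_expRN_powR x0).
Qed.

End stretched_exponential.

Lemma measurable_expR_mul_powR (R : realType) (f : R -> R) (p : R) :
  measurable_fun setT f -> measurable_fun setT (fun s => expR (f s) * s `^ p).
Proof.
move=> mf; apply: measurable_funM; first exact: measurableT_comp.
exact: measurable_powR.
Qed.

Lemma expRN_mul_powR_le (R : realType) (m : nat) (b s : R) : 1 <= b -> 1 <= s ->
  expR (- (s `^ b) / 2) * s `^ (m%:R * b + 1) <=
  (4 * m.+1%:R) ^+ m.+1 * (expR (- (s `^ b / 4)) * s `^ (b - 1)).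
Proof.
move=> b1 s1; have s0 : 0 < s by exact: lt_le_trans s1.
set t := s `^ b; set E := expR (- (t / 4)).
have exponent_le : s `^ (m%:R * b + 1) <= t ^+ m.+1 * s `^ (b - 1).
  rewrite -powR_mulrn ?powR_ge0 // -powRrM -powRD; last first.
    by rewrite (gt_eqF s0) implybT.
  by apply: ler_powR => //; lra.
have expR_half : expR (- t / 2) = E * E by rewrite -expRD; congr expR; lra.
rewrite expR_half.
apply: le_trans (ler_wpM2l (mulr_ge0 (expR_ge0 _) (expR_ge0 _)) exponent_le) _.
rewrite mulrACA [_ * t ^+ _]mulrC ler_wpM2r ?mulr_ge0 ?expR_ge0 ?powR_ge0 //.
by apply: exprn_mul_expRN_le; rewrite ?powR_ge0.
Qed.

Lemma integral_expRN_mul_powR_le (R : realType) (m : nat) (b : R) : 1 <= b ->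
  (\int[lebesgue_measure]_(s in `[1%R, +oo[)
      (expR (- (s `^ b) / 2) * s `^ (m%:R * b + 1))%:E <=
   ((4 * m.+1%:R) ^+ m.+1 * (4 / b * expR (- (1 / 4))))%:E)%E.
Proof.
move=> b1; have b0 : 0 < b by exact: lt_le_trans b1.
set K : R := (4 * m.+1%:R) ^+ m.+1.
have K0 : 0 <= K by rewrite exprn_ge0 // mulr_ge0 // ler0n.
have mf : measurable_fun setT
    (fun s : R => expR (- (s `^ b) / 2) * s `^ (m%:R * b + 1)).
  apply: measurable_expR_mul_powR; apply: measurable_funM => //.
  exact: measurableT_comp (measurable_powR _).
have mw : measurable_fun setT (fun s : R => expR (- (s `^ b / 4)) * s `^ (b - 1)).
  apply: measurable_expR_mul_powR; apply: measurableT_comp => //.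
  exact: measurable_funM (measurable_powR _) _.
rewrite [X in expR (- (X / 4))](_ : 1 = 1 `^ b); last by rewrite powR1.
rewrite EFinM -integral_expRN_powR //.
rewrite -ge0_integralZl_EFin //; last 2 first.
- by move=> x _; rewrite lee_fin mulr_ge0 ?expR_ge0 ?powR_ge0.
- by apply/measurable_EFinP; exact: measurable_funS mw.
apply: ge0_le_integral => //.
- by move=> x _; rewrite lee_fin mulr_ge0 ?expR_ge0 ?powR_ge0.
- by apply/measurable_EFinP; exact: measurable_funS mf.
- by apply/measurable_funeM/measurable_EFinP; exact: measurable_funS mw.
- move=> x; rewrite /= in_itv /= andbT => x1.
  by rewrite -EFinM lee_fin; exact: expRN_mul_powR_le.
Qed.

Theorem lemma4 (R : realType) (m : nat) :
  exists C : R, forall rho : R, 0 < rho <= 1 ->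
    ((rho^-1)%:E *
      \int[@lebesgue_measure R]_(s in `[1%R, +oo[%classic)
         (expR (- (s `^ rho^-1) / 2) * s `^ (m%:R / rho + 1))%:E <= C%:E)%E.
Proof.
exists (4 * (4 * m.+1%:R) ^+ m.+1 * expR (- (1 / 4))) => rho /andP[rho0 rho1].
have rhoV1 : 1 <= rho^-1 by rewrite invf_ge1.
apply: le_trans (lee_wpmul2l _ (integral_expRN_mul_powR_le m rhoV1)) _.
  by rewrite lee_fin invr_ge0 ltW.
rewrite -EFinM lee_fin le_eqVlt; apply: predU1l.
by field; rewrite lt0r_neq0.
Qed.
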